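(* Let $R$ be an associative unital division ring over a field of characteristic $0$, and let $\varphi_k\in R$ for $k\in\mathbb{Z}$. For $m\in\mathbb{Z}$ and $n\geq1$ put $$\Theta_{m,n}=\bigl(\varphi_{m+i+j-1}\bigr)_{1\leq i,j\leq n},\qquad \theta_{m,n}=|\Theta_{m,n}|_{nn},$$ with the convention $\theta_{m,0}^{-1}:=0$, and assume all quasideterminants involved are defined and all $\theta_{m,n}$ ($n\ge1$) invertible. Then for all $m\in\mathbb{Z}$, $n\geq1$, $$\theta_{m+2,n}=\theta_{m,n+1}+\theta_{m+1,n}\bigl(\theta_{m,n}^{-1}-\theta_{m+2,n-1}^{-1}\bigr)\theta_{m+1,n}.$$
   Context: For an $n\times n$ matrix $X$ over $R$, $|X|_{ij}=x_{ij}-r_i^j(X^{ij})^{-1}c_j^i$, where $X^{ij}$ is $X$ with row $i$ and column $j$ removed, $r_i^j$ is row $i$ without its $j$-th entry and $c_j^i$ is column $j$ without its $i$-th entry; for $n=1$, $|X|_{11}=x_{11}$. *)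

From HB Require Import structures.
From mathcomp Require Import all_boot all_order all_algebra.
From Stdlib Require Import ClassicalEpsilon.
Set Implicit Arguments. Unset Strict Implicit. Unset Printing Implicit Defensive.
Import Order.TTheory GRing.Theory Num.Theory.
Local Open Scope ring_scope.

Section QuasiDet.
Variable R : unitRingType.

Definition mx_is_inv (k : nat) (A B : 'M[R]_k) : Prop :=
  A *m B = 1%:M /\ B *m A = 1%:M.

Definition mx_invertible (k : nat) (A : 'M[R]_k) : Prop :=
  exists B, mx_is_inv A B.

(* The (unique, when it exists) two-sided inverse; junk value otherwise. *)
Definition mx_inv (k : nat) (A : 'M[R]_k) : 'M[R]_k :=
  epsilon (inhabits 0) (fun B => mx_is_inv A B).

Definition qminor (n : nat) (X : 'M[R]_n.+1) (i j : 'I_n.+1) : 'M[R]_n :=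
  row' i (col' j X).

(* |X|_{ij} = x_ij - r_i^j (X^{ij})^{-1} c_j^i.  For n.+1 = 1 the correction
   term is an empty product, i.e. |X|_{11} = x_11. *)
Definition qdet (n : nat) (X : 'M[R]_n.+1) (i j : 'I_n.+1) : R :=
  X i j - (row i (col' j X) *m mx_inv (qminor X i j) *m col j (row' i X)) 0 0.

Definition qdet_defined (n : nat) (X : 'M[R]_n.+1) (i j : 'I_n.+1) : Prop :=
  mx_invertible (qminor X i j).

(* Theta_{m,n} = (phi_{m+i+j-1})_{1<=i,j<=n}; with 0-based indices i, j
   the entry is phi_{m+i+j+1}. *)
Definition Theta (phi : int -> R) (m : int) (n : nat) : 'M[R]_n :=
  \matrix_(i < n, j < n) phi (m + (i + j + 1)%:Z).

(* theta_{m,n} = |Theta_{m,n}|_{nn} for n >= 1 (value 0 for n = 0, unused). *)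
Definition theta (phi : int -> R) (m : int) (n : nat) : R :=
  match n with
  | 0 => 0
  | n'.+1 => qdet (Theta phi m n'.+1) ord_max ord_max
  end.

Definition theta_inv (phi : int -> R) (m : int) (n : nat) : R :=
  match n with
  | 0 => 0
  | _.+1 => (theta phi m n)^-1
  end.

End QuasiDet.

(* Write Theta_{m,n+1} = [[phi_{m+1}, u], [v, D]] with D = Theta_{m+2,n}, and let
   s = phi_{m+1} - u D^-1 v be the Schur complement of D, a unit because both
   Theta_{m,n+1} and D are invertible.  With x = (1; -D^-1 v) and
   y = (1, -u D^-1), the block-inverse formula reads
     Theta_{m,n+1}^-1 = diag(0, D^-1) + x s^-1 y.
   Since the corner entry of the inverse of a matrix is the inverse of its last
   quasideterminant, taking corners gives
     theta_{m,n+1}^-1 - theta_{m+2,n}^-1 = x_n s^-1 y_n.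
   Substituting the formula into the definition of theta_{m,n+2} gives the
   Sylvester-type step theta_{m,n+2} = theta_{m+2,n+1} - (r x) s^-1 (y c), where r and
   c are the last row and column of Theta_{m,n+2} without their common corner.
   Finally Theta_{m+1,n+1} is Theta_{m,n+2} with its first row and last column
   deleted, so Theta_{m+1,n+1} x = (0, ..., 0, r x)^T and hence
   r x = theta_{m+1,n+1} x_n; symmetrically y c = y_n theta_{m+1,n+1}. *)

From HB Require Import structures.
From mathcomp Require Import all_boot all_order all_algebra zify.
From Stdlib Require Import ClassicalEpsilon.
Import GRing.Theory.
Set Implicit Arguments. Unset Strict Implicit. Unset Printing Implicit Defensive.
Local Open Scope ring_scope.

Section Quasideterminant.
Variable R : unitRingType.

Lemma mx_invP k (A : 'M[R]_k) : mx_invertible A -> mx_is_inv A (mx_inv A).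
Proof. by move=> [B AB]; exact: epsilon_spec (ex_intro _ B AB). Qed.

Lemma mx_inv_uniq k (A B : 'M[R]_k) : mx_invertible A -> A *m B = 1%:M -> mx_inv A = B.
Proof.
by move=> /mx_invP[_ invA] AB; rewrite -[mx_inv A]mulmx1 -AB mulmxA invA mul1mx.
Qed.

Lemma mulmx_split_max m k n (A : 'M[R]_(m, k.+1)) (B : 'M_(k.+1, n)) :
  A *m B = col' ord_max A *m row' ord_max B + col ord_max A *m row ord_max B.
Proof.
apply/matrixP => i j; rewrite !mxE big_ord_recr big_ord1 !mxE; congr (_ + _).
apply: eq_bigr => l _; rewrite !mxE.
by congr (A _ _ * B _ _); apply: val_inj; rewrite /= /bump leqNgt ltn_ord.
Qed.

Lemma mx11_mul (A B : 'M[R]_1) : (A *m B) 0 0 = A 0 0 * B 0 0.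
Proof. by rewrite mxE big_ord1. Qed.

Lemma mulmx_col_scalar_row p q (x : 'cV[R]_p) (a : R) (y : 'rV_q) i j :
  (x *m a%:M *m y) i j = x i 0 * a * y 0 j.
Proof. by rewrite mxE big_ord1 mxE big_ord1 mxE eqxx mulr1n. Qed.

Lemma qdet_mulmx_col k (X : 'M[R]_k.+1) (y : 'cV_k.+1) :
    mx_invertible (qminor X ord_max ord_max) -> row' ord_max (X *m y) = 0 ->
  qdet X ord_max ord_max * y ord_max 0 = (X *m y) ord_max 0.
Proof.
move=> /mx_invP[_ invX'] Xy_low.
set B := mx_inv _ in invX'; set X' := qminor _ _ _ in invX' *.
set r := row ord_max (col' ord_max X); set c := col ord_max (row' ord_max X).
have splitXy := mulmx_split_max X y.
have y'E : row' ord_max y = - (B *m c *m row ord_max y).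
  have low : X' *m row' ord_max y + c *m row ord_max y = 0.
    rewrite -Xy_low splitXy raddfD /=.
    by apply/matrixP => i j; rewrite !mxE; congr (_ + _); apply: eq_bigr => l _; rewrite !mxE.
  move/eqP: low; rewrite addr_eq0 => /eqP low.
  by rewrite -[LHS]mul1mx -invX' -[LHS]mulmxA low mulmxN !mulmxA.
have -> : (X *m y) ord_max 0 = (r *m row' ord_max y) 0 0 + X ord_max ord_max * y ord_max 0.
  rewrite splitXy !mxE big_ord1 !mxE; congr (_ + _).
  by apply: eq_bigr => l _; rewrite !mxE.
rewrite y'E mulmxN !mulmxA -mulNmx mx11_mul [row _ _ _ _]mxE [(- _ : 'M_1) _ _]mxE.
by rewrite /qdet -/X' -/B -/r -/c mulrBl addrC mulNr.
Qed.

Lemma qdet_mulmx_row k (X : 'M[R]_k.+1) (z : 'rV_k.+1) :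
    mx_invertible (qminor X ord_max ord_max) -> col' ord_max (z *m X) = 0 ->
  z 0 ord_max * qdet X ord_max ord_max = (z *m X) 0 ord_max.
Proof.
move=> /mx_invP[invX' _] zX_left.
set B := mx_inv _ in invX'; set X' := qminor _ _ _ in invX' *.
set r := row ord_max (col' ord_max X); set c := col ord_max (row' ord_max X).
have splitzX := mulmx_split_max z X.
have z'E : col' ord_max z = - (col ord_max z *m r *m B).
  have left : col' ord_max z *m X' + col ord_max z *m r = 0.
    rewrite -zX_left splitzX raddfD /=.
    by apply/matrixP => i j; rewrite !mxE; congr (_ + _); apply: eq_bigr => l _; rewrite !mxE.
  move/eqP: left; rewrite addr_eq0 => /eqP left.
  by rewrite -[LHS]mulmx1 -invX' mulmxA left mulNmx.
have -> : (z *m X) 0 ord_max = (col' ord_max z *m c) 0 0 + z 0 ord_max * X ord_max ord_max.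
  rewrite splitzX !mxE big_ord1 !mxE; congr (_ + _).
  by apply: eq_bigr => l _; rewrite !mxE.
rewrite z'E mulNmx -!mulmxA -mulNmx mx11_mul [(- _ : 'M_1) _ _]mxE [col _ _ _ _]mxE !mulmxA.
by rewrite /qdet -/X' -/B -/r -/c mulrBr addrC mulNr.
Qed.

Lemma invr_qdet k (X : 'M[R]_k.+1) :
    mx_invertible X -> mx_invertible (qminor X ord_max ord_max) ->
  (qdet X ord_max ord_max)^-1 = mx_inv X ord_max ord_max.
Proof.
move=> invX invX'; have [XP PX] := mx_invP invX; set P := mx_inv X in XP PX *.
have XPl : X *m col ord_max P = delta_mx ord_max 0 by rewrite colE mulmxA XP mul1mx.
have PXl : row ord_max P *m X = delta_mx 0 ord_max by rewrite rowE -mulmxA PX mulmx1.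
have qP : qdet X ord_max ord_max * P ord_max ord_max = 1.
  have := qdet_mulmx_col (y := col ord_max P) invX'; rewrite XPl !mxE !eqxx => -> //.
  by apply/matrixP => i j; rewrite !mxE lift_eqF.
have Pq : P ord_max ord_max * qdet X ord_max ord_max = 1.
  have := qdet_mulmx_row (z := row ord_max P) invX'; rewrite PXl !mxE !eqxx => -> //.
  by apply/matrixP => i j; rewrite !mxE lift_eqF andbF.
have q_unit : qdet X ord_max ord_max \is a GRing.unit.
  by apply/unitrP; exists (P ord_max ord_max).
by rewrite -[LHS]mulr1 -qP mulKr.
Qed.

End Quasideterminant.

Section SchurComplement.
Variables (R : unitRingType) (k : nat).
Variables (a : 'M[R]_1) (u : 'M[R]_(1, k)) (v : 'M[R]_(k, 1)) (D Di : 'M[R]_k).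
Hypotheses (DDi : D *m Di = 1%:M) (DiD : Di *m D = 1%:M).

Definition schur_compl := a - u *m Di *m v.

Lemma schur_compl_unit :
  mx_invertible (block_mx a u v D) -> schur_compl 0 0 \is a GRing.unit.
Proof.
move=> /mx_invP[MP PM]; set P := mx_inv (block_mx a u v D) in MP PM.
rewrite -[P]submxK in MP PM.
move: MP PM; rewrite !mulmx_block (scalar_mx_block 1 k).
move=> /eq_block_mx[MP1 _ MP2 _] /eq_block_mx[PM1 PM2 _ _].
set p := ulsubmx P in MP1 MP2 PM1 PM2 *.
have P_dl : dlsubmx P = - (Di *m v *m p).
  apply/eqP; rewrite -addr_eq0 -[dlsubmx P]mul1mx -DiD -mulmxA -mulmxA -mulmxDr.
  by rewrite addrC MP2 mulmx0.
have P_ur : ursubmx P = - (p *m u *m Di).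
  apply/eqP; rewrite -addr_eq0 -[ursubmx P]mulmx1 -DDi mulmxA -mulmxDl.
  by rewrite addrC PM2 mul0mx.
have Sp : schur_compl *m p = 1%:M.
  by rewrite -MP1 P_dl /schur_compl mulmxBl mulmxN !mulmxA.
have pS : p *m schur_compl = 1%:M.
  by rewrite -PM1 P_ur /schur_compl mulmxBr mulNmx !mulmxA.
apply/unitrP; exists (p 0 0); rewrite -!mx11_mul Sp pS.
by rewrite mxE.
Qed.

Lemma mulmx_block_schur_inv (si : R) : schur_compl 0 0 * si = 1 ->
  block_mx a u v D *m (block_mx 0 0 0 Di
    + col_mx 1%:M (- (Di *m v)) *m si%:M *m row_mx 1%:M (- (u *m Di))) = 1%:M.
Proof.
move=> Ssi.
have Mx : block_mx a u v D *m col_mx 1%:M (- (Di *m v)) = col_mx schur_compl 0.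
  by rewrite mul_block_col !mulmx1 !mulmxN !mulmxA DDi mul1mx subrr.
have Ssi_mx : schur_compl *m si%:M = 1%:M.
  by rewrite [schur_compl]mx11_scalar -scalar_mxM Ssi.
rewrite mulmxDr mulmx_block !mulmx0 DDi !addr0.
rewrite !mulmxA Mx mul_col_mx Ssi_mx mul0mx mul_col_row !mul0mx add_block_mx.
by rewrite !mul1mx !add0r addrN addr0 (scalar_mx_block 1 k).
Qed.

Lemma mx_inv_block_schur : mx_invertible (block_mx a u v D) ->
  mx_inv (block_mx a u v D) = block_mx 0 0 0 Di
    + col_mx 1%:M (- (Di *m v)) *m (schur_compl 0 0)^-1%:M *m row_mx 1%:M (- (u *m Di)).
Proof.
move=> invM; have S_unit := schur_compl_unit invM.
by apply: mx_inv_uniq invM _; apply: mulmx_block_schur_inv; apply: divrr.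
Qed.

End SchurComplement.

Section HankelQuasideterminants.
Variables (R : unitRingType) (phi : int -> R).

Ltac Theta_entries :=
  apply/matrixP => -[i ?] [j ?]; rewrite !mxE ?lift_max /=; congr phi; lia.

Lemma qminor_Theta m n : qminor (Theta phi m n.+1) ord_max ord_max = Theta phi m n.
Proof. Theta_entries. Qed.

Lemma drsubmx_Theta m n : drsubmx (Theta phi m (1 + n)) = Theta phi (m + 2) n.
Proof. Theta_entries. Qed.

Lemma rsubmx_Theta_row m n :
  rsubmx (row ord_max (col' ord_max (Theta phi m n.+2)) : 'rV_(1 + n))
  = row ord_max (col' ord_max (Theta phi (m + 2) n.+1)).
Proof. Theta_entries. Qed.

Lemma dsubmx_Theta_col m n :
  dsubmx (col ord_max (row' ord_max (Theta phi m n.+2)) : 'cV_(1 + n))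
  = col ord_max (row' ord_max (Theta phi (m + 2) n.+1)).
Proof. Theta_entries. Qed.

Lemma row'_Theta_shift m n :
  row' ord_max (Theta phi (m + 1) n.+1) = dsubmx (Theta phi m (1 + n)).
Proof. Theta_entries. Qed.

Lemma row_Theta_shift m n :
  row ord_max (Theta phi (m + 1) n.+1) = row ord_max (col' ord_max (Theta phi m n.+2)).
Proof. Theta_entries. Qed.

Lemma col'_Theta_shift m n :
  col' ord_max (Theta phi (m + 1) n.+1) = rsubmx (Theta phi m (1 + n)).
Proof. Theta_entries. Qed.

Lemma col_Theta_shift m n :
  col ord_max (Theta phi (m + 1) n.+1) = col ord_max (row' ord_max (Theta phi m n.+2)).
Proof. Theta_entries. Qed.

Lemma Theta_corner m n :
  Theta phi m n.+2 ord_max ord_max = Theta phi (m + 2) n.+1 ord_max ord_max.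
Proof. rewrite !mxE /=; congr phi; lia. Qed.

Hypothesis Theta_invertible : forall m n, mx_invertible (Theta phi m n).

Lemma theta_inv_Theta m n : theta_inv phi m n.+1 = mx_inv (Theta phi m n.+1) ord_max ord_max.
Proof. by apply: invr_qdet; rewrite ?qminor_Theta. Qed.

Section RecurrenceStep.
Variables (m : int) (n : nat).

Local Notation A := (Theta phi m (1 + n)).
Local Notation Di := (mx_inv (Theta phi (m + 2) n)).
Local Notation s := (schur_compl (ulsubmx A) (ursubmx A) (dlsubmx A) Di 0 0).
Local Notation x := (col_mx 1%:M (- (Di *m dlsubmx A)) : 'cV_(1 + n)).
Local Notation y := (row_mx 1%:M (- (ursubmx A *m Di)) : 'rV_(1 + n)).
Local Notation r := (row ord_max (col' ord_max (Theta phi m n.+2)) : 'rV_(1 + n)).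
Local Notation c := (col ord_max (row' ord_max (Theta phi m n.+2)) : 'cV_(1 + n)).

Lemma Theta_block : A = block_mx (ulsubmx A) (ursubmx A) (dlsubmx A) (Theta phi (m + 2) n).
Proof. by rewrite -drsubmx_Theta submxK. Qed.

Lemma mx_inv_Theta : mx_inv A = block_mx 0 0 0 Di + x *m s^-1%:M *m y.
Proof.
have [DDi DiD] := mx_invP (Theta_invertible (m + 2) n).
by rewrite {1}Theta_block; apply: mx_inv_block_schur DDi DiD _; rewrite -Theta_block.
Qed.

Lemma theta_inv_step :
  theta_inv phi m n.+1 = theta_inv phi (m + 2) n + x ord_max 0 * s^-1 * y 0 ord_max.
Proof.
rewrite theta_inv_Theta mx_inv_Theta mxE; congr (_ + _).
  case: n => [|n'].
    have -> : (ord_max : 'I_(1 + 0)) = lshift 0 ord0 by apply: val_inj.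
    by rewrite block_mxEul mxE.
  have -> : (ord_max : 'I_(1 + n'.+1)) = rshift 1 ord_max by apply: val_inj.
  by rewrite block_mxEdr theta_inv_Theta.
exact: mulmx_col_scalar_row.
Qed.

Lemma theta_sylvester :
  theta phi m n.+2 = theta phi (m + 2) n.+1 - (r *m x) 0 0 * s^-1 * (y *m c) 0 0.
Proof.
have inner_block : r *m block_mx 0 0 0 Di *m c
    = row ord_max (col' ord_max (Theta phi (m + 2) n.+1)) *m Di
      *m col ord_max (row' ord_max (Theta phi (m + 2) n.+1)).
  rewrite -[r](@hsubmxK _ 1 1 n) -[c](@vsubmxK _ 1 n 1) rsubmx_Theta_row dsubmx_Theta_col.
  by rewrite mul_row_block !mulmx0 !addr0 add0r mul_row_col mul0mx add0r.
rewrite /theta /qdet !qminor_Theta mx_inv_Theta Theta_corner.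
rewrite mulmxDr mulmxDl inner_block [(_ + _ : 'M_1) 0 0]mxE opprD addrA; congr (_ - _).
by rewrite !mulmxA -(mulmxA _ y) mulmx_col_scalar_row.
Qed.

Lemma theta_shift_mulr : theta phi (m + 1) n.+1 * x ord_max 0 = (r *m x) 0 0.
Proof.
have [DDi _] := mx_invP (Theta_invertible (m + 2) n).
rewrite /theta qdet_mulmx_col ?qminor_Theta //.
  by rewrite -row_Theta_shift -(row_mul ord_max) [RHS]mxE.
rewrite row'Esub -mul_rowsub_mx -row'Esub row'_Theta_shift.
rewrite [X in dsubmx X]Theta_block block_mxEv col_mxKd.
by rewrite (@mul_row_col _ _ 1 n) mulmx1 mulmxN mulmxA DDi mul1mx subrr.
Qed.

Lemma theta_shift_mull : y 0 ord_max * theta phi (m + 1) n.+1 = (y *m c) 0 0.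
Proof.
have [_ DiD] := mx_invP (Theta_invertible (m + 2) n).
rewrite /theta qdet_mulmx_row ?qminor_Theta //.
  by rewrite -col_Theta_shift colE mulmxA -colE [RHS]mxE.
rewrite col'Esub -mulmx_colsub -col'Esub col'_Theta_shift.
rewrite [X in rsubmx X]Theta_block block_mxEh row_mxKr.
by rewrite (@mul_row_col _ _ 1 n) mul1mx mulNmx -mulmxA DiD mulmx1 addrN.
Qed.

Lemma theta_recurrence :
  theta phi (m + 2) n.+1 = theta phi m n.+2
    + theta phi (m + 1) n.+1 * (theta_inv phi m n.+1 - theta_inv phi (m + 2) n)
      * theta phi (m + 1) n.+1.
Proof.
rewrite theta_inv_step [_ + _ - _]addrC addKr theta_sylvester.
by rewrite -theta_shift_mulr -theta_shift_mull !mulrA subrK.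
Qed.

End RecurrenceStep.

End HankelQuasideterminants.

Theorem proposition4p5 (F : fieldType) (R : unitAlgType F)
    (charF0 : [pchar F] =i pred0)
    (divR : forall x : R, x != 0 -> x \is a GRing.unit)
    (phi : int -> R)
    (Hdef : forall (m : int) (n : nat),
        qdet_defined (Theta phi m n.+1) ord_max ord_max)
    (Hinv : forall (m : int) (n : nat), (0 < n)%N ->
        theta phi m n \is a GRing.unit)
    (m : int) (n : nat) :
  (0 < n)%N ->
  theta phi (m + 2) n =
    theta phi m n.+1
    + theta phi (m + 1) n * (theta_inv phi m n - theta_inv phi (m + 2) n.-1)
      * theta phi (m + 1) n.
Proof.
(* Invertibility of every Theta (which is what Hdef says) already makes all the
   quasideterminants involved units. *)
case: n => // n _.
have Theta_invertible m' n' : mx_invertible (Theta phi m' n').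
  by rewrite -qminor_Theta; exact: Hdef.
exact: theta_recurrence.
Qed.
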